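(* Let $X$ be a real Banach lattice and let $A \subseteq X$ be a solid set. Then an element $a \in A$ is an extreme point of $A$ if and only if $|a|$ is an order extreme point of $A$.
   Context: A set $C\subseteq X$ is solid if whenever $x\in X$, $z\in C$ and $|x|\le |z|$, then $x\in C$. For $A \subseteq X$, a point $a\in A$ is an order extreme point of $A$ if for all $x_0,x_1\in A$ and $t\in(0,1)$, the inequality $a\le (1-t)x_0+tx_1$ implies $x_0=a=x_1$. Extreme points are meant in the usual (convexity) sense. *)

From Stdlib Require Import Reals.
Open Scope R_scope.

Set Implicit Arguments.

Record BanachLattice := {
  carrier :> Type;
  vadd : carrier -> carrier -> carrier;
  vzero : carrier;
  vopp : carrier -> carrier;
  vscal : R -> carrier -> carrier;
  vle : carrier -> carrier -> Prop;
  vjoin : carrier -> carrier -> carrier;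
  vnorm : carrier -> R;
  vaddA : forall x y z, vadd x (vadd y z) = vadd (vadd x y) z;
  vaddC : forall x y, vadd x y = vadd y x;
  vadd0 : forall x, vadd x vzero = x;
  vaddN : forall x, vadd x (vopp x) = vzero;
  vscal1 : forall x, vscal 1 x = x;
  vscalA : forall s t x, vscal s (vscal t x) = vscal (s * t) x;
  vscalDr : forall t x y, vscal t (vadd x y) = vadd (vscal t x) (vscal t y);
  vscalDl : forall s t x, vscal (s + t) x = vadd (vscal s x) (vscal t x);
  vle_refl : forall x, vle x x;
  vle_anti : forall x y, vle x y -> vle y x -> x = y;
  vle_trans : forall x y z, vle x y -> vle y z -> vle x z;
  vle_add : forall x y z, vle x y -> vle (vadd x z) (vadd y z);
  vle_scal : forall t x y, 0 <= t -> vle x y -> vle (vscal t x) (vscal t y);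
  vjoin_l : forall x y, vle x (vjoin x y);
  vjoin_r : forall x y, vle y (vjoin x y);
  vjoin_lub : forall x y z, vle x z -> vle y z -> vle (vjoin x y) z;
  vnorm_ge0 : forall x, 0 <= vnorm x;
  vnorm_eq0 : forall x, vnorm x = 0 -> x = vzero;
  vnorm_scal : forall t x, vnorm (vscal t x) = Rabs t * vnorm x;
  vnorm_triangle : forall x y, vnorm (vadd x y) <= vnorm x + vnorm y;
  vnorm_lattice : forall x y,
    vle (vjoin x (vopp x)) (vjoin y (vopp y)) -> vnorm x <= vnorm y;
  vcomplete : forall u : nat -> carrier,
    (forall eps, 0 < eps -> exists N, forall m n, (N <= m)%nat -> (N <= n)%nat ->
        vnorm (vadd (u m) (vopp (u n))) < eps) ->
    exists l, forall eps, 0 < eps -> exists N, forall n, (N <= n)%nat ->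
        vnorm (vadd (u n) (vopp l)) < eps
}.

Section Defs.
Variable X : BanachLattice.

Definition vabs (x : X) : X := vjoin X x (vopp X x).

Definition convex_comb (t : R) (x0 x1 : X) : X :=
  vadd X (vscal X (1 - t) x0) (vscal X t x1).

Definition solid (C : X -> Prop) : Prop :=
  forall x z, C z -> vle X (vabs x) (vabs z) -> C x.

Definition extreme_point (A : X -> Prop) (a : X) : Prop :=
  A a /\ forall x0 x1 t, A x0 -> A x1 -> 0 < t < 1 ->
    a = convex_comb t x0 x1 -> x0 = a /\ a = x1.

Definition order_extreme_point (A : X -> Prop) (a : X) : Prop :=
  A a /\ forall x0 x1 t, A x0 -> A x1 -> 0 < t < 1 ->
    vle X a (convex_comb t x0 x1) -> x0 = a /\ a = x1.

End Defs.
Arguments vabs : clear implicits.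
Arguments convex_comb : clear implicits.
Arguments solid : clear implicits.
Arguments extreme_point : clear implicits.
Arguments order_extreme_point : clear implicits.

(** (=>) Let |a| ≤ (1-t)x0 + t x1 with x0, x1 ∈ A.  Then |a| ≤ (1-t)|x0| + t|x1|,
    and the Riesz decomposition property splits a = b + c with |b| ≤ (1-t)|x0|,
    |c| ≤ t|x1|.  Writing a = (1-t)(b/(1-t)) + t(c/t), a convex combination of
    points of A, extremality gives |a| ≤ |x0| and |a| ≤ |x1|.  If |a| ≤ |x| with
    x ∈ A then a ± (|x| - |a|) ∈ A, so extremality forces |x| = |a|.  Hence
    x0, x1 ≤ |a| ≤ (1-t)x0 + t x1, which squeezes x0 = |a| = x1.

    (<=) If a = (1-t)x0 + t x1 then |a| ≤ (1-t)|x0| + t|x1|, so order extremality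
    gives |x0| = |x1| = |a|.  Using |x0 + x1| + |x0 - x1| ≤ 2|a| and
    a = (x0 + x1)/2 + (1/2 - t)(x0 - x1), one gets (1/2 - |1/2 - t|)|x0 - x1| ≤ 0,
    hence x0 = x1 = a. *)

From Stdlib Require Import Reals Lra List Lia.
Open Scope R_scope.
Set Implicit Arguments.
Unset Strict Implicit.

(** A vector expression is reified as a [vexpr] over a list of atoms; both sides
    of an identity are rewritten as the linear combination [lincomb] of the atoms
    with their coefficients [coef], reducing the identity to equalities of real
    coefficients, which [ring]/[field] then close. *)

Inductive vexpr :=
  | VAtom (n : nat) | VZero | VAdd (e1 e2 : vexpr) | VOpp (e : vexpr) | VScal (r : R) (e : vexpr).

Fixpoint coef (e : vexpr) (i : nat) : R :=
  match e with
  | VAtom n => if Nat.eqb n i then 1 else 0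
  | VZero => 0
  | VAdd e1 e2 => coef e1 i + coef e2 i
  | VOpp e => - coef e i
  | VScal r e => r * coef e i
  end.

Section Normalisation.
Variable X : BanachLattice.

Fixpoint vden (env : list X) (e : vexpr) : X :=
  match e with
  | VAtom n => nth n env (vzero X)
  | VZero => vzero X
  | VAdd e1 e2 => vadd X (vden env e1) (vden env e2)
  | VOpp e => vopp X (vden env e)
  | VScal r e => vscal X r (vden env e)
  end.

Fixpoint lincomb (f : nat -> R) (k : nat) (l : list X) : X :=
  match l with
  | nil => vzero X
  | x :: l' => vadd X (vscal X (f k) x) (lincomb f (S k) l')
  end.

Lemma vadd_cancel_r (x y z : X) : vadd X x z = vadd X y z -> x = y.
Proof.
  intro H. rewrite <- (vadd0 X x), <- (vadd0 X y), <- (vaddN X z), !vaddA, H.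
  reflexivity.
Qed.

Lemma vadd0l (x : X) : vadd X (vzero X) x = x.
Proof. rewrite vaddC; apply vadd0. Qed.

Lemma vscal0l (x : X) : vscal X 0 x = vzero X.
Proof.
  apply (vadd_cancel_r (z := vscal X 0 x)). rewrite vadd0l, <- vscalDl.
  f_equal; ring.
Qed.

Lemma vscal0r (t : R) : vscal X t (vzero X) = vzero X.
Proof.
  apply (vadd_cancel_r (z := vscal X t (vzero X))).
  rewrite vadd0l, <- vscalDr, vadd0; reflexivity.
Qed.

Lemma vopp_scal (x : X) : vopp X x = vscal X (-1) x.
Proof.
  apply (vadd_cancel_r (z := x)). rewrite vaddC, vaddN.
  assert (H : vadd X (vscal X (-1) x) (vscal X 1 x) = vzero X).
  { rewrite <- vscalDl. replace (-1 + 1) with 0 by ring. apply vscal0l. }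
  rewrite vscal1 in H. auto.
Qed.

Lemma lincomb_add f g k (l : list X) :
  lincomb (fun i => f i + g i) k l = vadd X (lincomb f k l) (lincomb g k l).
Proof.
  revert k; induction l as [|x l IH]; intro k; simpl.
  - rewrite vadd0; reflexivity.
  - rewrite IH, vscalDl, <- !vaddA. f_equal. rewrite !vaddA. f_equal. apply vaddC.
Qed.

Lemma lincomb_scal r f k (l : list X) :
  lincomb (fun i => r * f i) k l = vscal X r (lincomb f k l).
Proof.
  revert k; induction l as [|x l IH]; intro k; simpl.
  - rewrite vscal0r; reflexivity.
  - rewrite IH, vscalDr, vscalA; reflexivity.
Qed.

Lemma lincomb_ext f g k (l : list X) :
  (forall i, (k <= i)%nat -> f i = g i) -> lincomb f k l = lincomb g k l.
Proof.
  revert k; induction l as [|x l IH]; intros k H; simpl; [reflexivity|].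
  rewrite H, IH; [reflexivity| |lia]. intros; apply H; lia.
Qed.

Lemma lincomb_zero k (l : list X) : lincomb (fun _ => 0) k l = vzero X.
Proof.
  revert k; induction l as [|x l IH]; intro k; simpl; [reflexivity|].
  rewrite IH, vscal0l, vadd0; reflexivity.
Qed.

Lemma lincomb_atom n k (l : list X) :
  lincomb (fun i => if Nat.eqb (n + k) i then 1 else 0) k l = nth n l (vzero X).
Proof.
  revert n k; induction l as [|x l IH]; intros n k; simpl.
  - destruct n; reflexivity.
  - destruct n as [|n].
    + simpl. rewrite Nat.eqb_refl, vscal1, (lincomb_ext (g := fun _ => 0)).
      * rewrite lincomb_zero, vadd0; reflexivity.
      * intros i Hi. destruct (Nat.eqb_spec k i); [lia|reflexivity].
    + replace (S n + k)%nat with (n + S k)%nat by lia. rewrite IH.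
      replace (Nat.eqb (n + S k) k) with false by (symmetry; apply Nat.eqb_neq; lia).
      rewrite vscal0l, vadd0l; reflexivity.
Qed.

Lemma vden_lincomb (env : list X) e : vden env e = lincomb (coef e) 0 env.
Proof.
  induction e as [n| |e1 IH1 e2 IH2|e IH|r e IH]; simpl.
  - rewrite <- (lincomb_atom n 0 env). apply lincomb_ext; intros i _.
    rewrite Nat.add_0_r; reflexivity.
  - symmetry; apply lincomb_zero.
  - rewrite IH1, IH2, <- lincomb_add; reflexivity.
  - rewrite IH, vopp_scal, <- lincomb_scal. apply lincomb_ext; intros; ring.
  - rewrite IH, <- lincomb_scal; reflexivity.
Qed.

Lemma vden_eq (env : list X) e1 e2 :
  lincomb (coef e1) 0 env = lincomb (coef e2) 0 env -> vden env e1 = vden env e2.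
Proof. rewrite !vden_lincomb; auto. Qed.

Lemma lincomb_cons_eq (r1 r2 : R) (x : X) s1 s2 :
  r1 = r2 -> s1 = s2 -> vadd X (vscal X r1 x) s1 = vadd X (vscal X r2 x) s2.
Proof. intros -> ->; reflexivity. Qed.

End Normalisation.

Ltac vlookup x env :=
  lazymatch env with
  | x :: _ => constr:(O)
  | _ :: ?l => let n := vlookup x l in constr:(S n)
  end.

Ltac vmem x env :=
  lazymatch env with
  | nil => constr:(false)
  | x :: _ => constr:(true)
  | _ :: ?l => vmem x l
  end.

Ltac vatoms X e env :=
  lazymatch e with
  | vadd _ ?a ?b => let env1 := vatoms X a env in vatoms X b env1
  | vopp _ ?a => vatoms X a env
  | vscal _ _ ?a => vatoms X a env
  | vzero _ => env
  | _ => lazymatch vmem e env with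
         | true => env
         | false => eval simpl in (@app (carrier X) env (e :: nil))
         end
  end.

Ltac vreify e env :=
  lazymatch e with
  | vadd _ ?a ?b => let x := vreify a env in let y := vreify b env in constr:(VAdd x y)
  | vopp _ ?a => let x := vreify a env in constr:(VOpp x)
  | vscal _ ?r ?a => let x := vreify a env in constr:(VScal r x)
  | vzero _ => constr:(VZero)
  | _ => let n := vlookup e env in constr:(VAtom n)
  end.

(** Proves a linear identity between vector expressions; coefficient equalities
    that [ring]/[field] cannot close are left as goals. *)
Ltac vring :=
  lazymatch goal with
  | |- @eq (carrier ?X) ?l ?r =>
    let env0 := vatoms X l (@nil (carrier X)) in
    let env1 := vatoms X r env0 in
    let env := eval simpl in env1 in
    let el := vreify l env in
    let er := vreify r env in
    change (vden env el = vden env er);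
    apply vden_eq; simpl;
    repeat (apply lincomb_cons_eq; [try ring; try field|]); try reflexivity
  end.

(** * Lattice calculus *)

Section VectorLattice.
Variable X : BanachLattice.

Local Notation "x ≤ y" := (vle X x y) (at level 70, no associativity).
Local Notation "x ⊕ y" := (vadd X x y) (at level 50, left associativity).
Local Notation "x ⊖ y" := (vadd X x (vopp X y)) (at level 50, left associativity).
Local Notation "t ⋅ x" := (vscal X t x) (at level 40, left associativity).
Local Notation zero := (vzero X).
Local Notation opp := (vopp X).
Local Notation abs := (vabs X).
Local Notation join := (vjoin X).
Local Notation comb := (convex_comb X).

(** Inequalities may be transported along equal differences:
    the basic tool to rearrange terms across [≤]. *)
Lemma le_shift (a b c d : X) : c ≤ d -> d ⊖ c = b ⊖ a -> a ≤ b.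
Proof.
  intros H E. pose proof (vle_add X _ _ (opp c) H) as H1.
  rewrite vaddN, E in H1. pose proof (vle_add X _ _ a H1) as H2.
  replace (zero ⊕ a) with a in H2 by vring.
  replace (b ⊖ a ⊕ a) with b in H2 by vring. exact H2.
Qed.

Lemma le_add2 (a b c d : X) : a ≤ b -> c ≤ d -> a ⊕ c ≤ b ⊕ d.
Proof.
  intros H1 H2. apply vle_trans with (b ⊕ c); [apply vle_add; auto|].
  rewrite (vaddC X b c), (vaddC X b d). apply vle_add; auto.
Qed.

Lemma scal_nonneg t (x : X) : 0 <= t -> zero ≤ x -> zero ≤ t ⋅ x.
Proof. intros Ht Hx. rewrite <- (vscal0r X t). apply vle_scal; auto. Qed.

Lemma le_scal_rev t (a b : X) : 0 < t -> t ⋅ a ≤ t ⋅ b -> a ≤ b.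
Proof.
  intros Ht H. apply (vle_scal X (t := /t)) in H; [|left; apply Rinv_0_lt_compat; auto].
  rewrite !vscalA, Rinv_l, !vscal1 in H; lra || auto.
Qed.

Lemma scal_cancel t (a b : X) : 0 < t -> t ⋅ a = t ⋅ b -> a = b.
Proof.
  intros Ht H. apply (f_equal (vscal X (/t))) in H.
  rewrite !vscalA, Rinv_l, !vscal1 in H; lra || auto.
Qed.

Lemma join_add_le (p q z M : X) : p ⊕ z ≤ M -> q ⊕ z ≤ M -> join p q ⊕ z ≤ M.
Proof.
  intros H1 H2. assert (H : join p q ≤ M ⊖ z).
  { apply vjoin_lub; [apply (le_shift H1)|apply (le_shift H2)]; vring. }
  apply (le_shift H). vring.
Qed.

Lemma join_scal_le t (p q M : X) : 0 < t -> t ⋅ p ≤ M -> t ⋅ q ≤ M -> t ⋅ join p q ≤ M.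
Proof.
  intros Ht H1 H2. apply (le_scal_rev (t := /t)); [apply Rinv_0_lt_compat; auto|].
  rewrite vscalA, Rinv_l, vscal1 by lra.
  apply vjoin_lub; apply (le_scal_rev (t := t)); auto;
    rewrite vscalA, Rinv_r, vscal1 by lra; auto.
Qed.

Lemma nonneg_sum_le0 (u w : X) : zero ≤ u -> zero ≤ w -> u ⊕ w ≤ zero -> u = zero.
Proof.
  intros Hu Hw H. apply vle_anti; auto.
  apply (le_shift (vle_trans X _ _ _ (le_add2 (vle_refl X u) Hw) H)). vring.
Qed.

Lemma abs_ge (x : X) : x ≤ abs x.
Proof. apply vjoin_l. Qed.

Lemma abs_geN (x : X) : opp x ≤ abs x.
Proof. apply vjoin_r. Qed.

Lemma abs_ge0 (x : X) : zero ≤ abs x.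
Proof.
  pose proof (le_add2 (abs_ge x) (abs_geN x)) as H.
  apply (vle_scal X (t := /2)) in H; [|lra].
  replace (/2 ⋅ (x ⊖ x)) with zero in H by vring.
  replace (/2 ⋅ (abs x ⊕ abs x)) with (abs x) in H by vring. exact H.
Qed.

Lemma abs_le (y z : X) : opp z ≤ y -> y ≤ z -> abs y ≤ z.
Proof. intros H1 H2. apply vjoin_lub; auto. apply (le_shift H1). vring. Qed.

Lemma abs_nonneg (x : X) : zero ≤ x -> abs x = x.
Proof.
  intro H. apply vle_anti; [|apply abs_ge]. apply abs_le; [|apply vle_refl].
  apply vle_trans with zero; auto. apply (le_shift H); vring.
Qed.

Lemma abs_abs (x : X) : abs (abs x) = abs x.
Proof. apply abs_nonneg, abs_ge0. Qed.

Lemma abs_opp (x : X) : abs (opp x) = abs x.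
Proof.
  apply vle_anti; apply abs_le.
  - apply (le_shift (abs_ge x)); vring.
  - apply abs_geN.
  - apply (le_shift (abs_ge (opp x))); vring.
  - apply (le_shift (abs_geN (opp x))); vring.
Qed.

Lemma abs_triangle (x y : X) : abs (x ⊕ y) ≤ abs x ⊕ abs y.
Proof.
  apply abs_le.
  - apply (le_shift (le_add2 (abs_geN x) (abs_geN y))); vring.
  - apply le_add2; apply abs_ge.
Qed.

Lemma abs_scal_nonneg t (x : X) : 0 <= t -> abs (t ⋅ x) = t ⋅ abs x.
Proof.
  intro Ht. destruct (Req_dec t 0) as [->|Ht0].
  - rewrite !vscal0l. apply abs_nonneg, vle_refl.
  - apply vle_anti.
    + apply abs_le.
      * apply (le_shift (vle_scal X _ _ Ht (abs_geN x))); vring.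
      * apply vle_scal; auto; apply abs_ge.
    + apply join_scal_le; [lra|apply abs_ge|].
      apply (le_shift (abs_geN (t ⋅ x))); vring.
Qed.

Lemma abs_scal t (x : X) : abs (t ⋅ x) = Rabs t ⋅ abs x.
Proof.
  destruct (Rle_lt_dec 0 t).
  - rewrite Rabs_pos_eq by auto. apply abs_scal_nonneg; auto.
  - rewrite Rabs_left by auto. replace (t ⋅ x) with ((- t) ⋅ opp x) by vring.
    rewrite abs_scal_nonneg, abs_opp by lra. reflexivity.
Qed.

Lemma abs_le0 (x : X) : abs x ≤ zero -> x = zero.
Proof.
  intro H. apply vle_anti.
  - apply vle_trans with (abs x); auto; apply abs_ge.
  - apply (le_shift (vle_trans X _ _ _ (abs_geN x) H)); vring.
Qed.

Lemma abs_scal_inv_le s (b y : X) : 0 < s -> abs b ≤ s ⋅ y -> abs (/s ⋅ b) ≤ y.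
Proof.
  intros Hs H. rewrite abs_scal_nonneg by (left; apply Rinv_0_lt_compat; lra).
  apply (vle_scal X (t := /s)) in H; [|left; apply Rinv_0_lt_compat; lra].
  rewrite vscalA, Rinv_l, vscal1 in H by lra. exact H.
Qed.

Lemma abs_sub_nonneg_le (p n : X) : zero ≤ p -> zero ≤ n -> abs (p ⊖ n) ≤ p ⊕ n.
Proof.
  intros Hp Hn. apply vle_trans with (1 := abs_triangle _ _).
  rewrite abs_opp, !abs_nonneg by auto. apply vle_refl.
Qed.

Lemma abs_convex_comb_le t (x0 x1 : X) :
  0 <= t <= 1 -> abs (comb t x0 x1) ≤ comb t (abs x0) (abs x1).
Proof.
  intro Ht. unfold convex_comb. apply vle_trans with (1 := abs_triangle _ _).
  rewrite !abs_scal, !Rabs_pos_eq by lra. apply vle_refl.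
Qed.

Lemma convex_comb_le_abs t (x0 x1 : X) :
  0 <= t <= 1 -> comb t x0 x1 ≤ comb t (abs x0) (abs x1).
Proof.
  intro Ht. apply le_add2; apply vle_scal; try lra; apply abs_ge.
Qed.

Lemma abs_add_abs_sub_le (x y c : X) :
  abs x ≤ c -> abs y ≤ c -> abs (x ⊕ y) ⊕ abs (x ⊖ y) ≤ 2 ⋅ c.
Proof.
  intros Hx Hy.
  assert (Bx : 2 ⋅ x ≤ 2 ⋅ c) by (apply vle_scal; [lra|exact (vle_trans X _ _ _ (abs_ge x) Hx)]).
  assert (Bx' : 2 ⋅ opp x ≤ 2 ⋅ c) by (apply vle_scal; [lra|exact (vle_trans X _ _ _ (abs_geN x) Hx)]).
  assert (By : 2 ⋅ y ≤ 2 ⋅ c) by (apply vle_scal; [lra|exact (vle_trans X _ _ _ (abs_ge y) Hy)]).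
  assert (By' : 2 ⋅ opp y ≤ 2 ⋅ c) by (apply vle_scal; [lra|exact (vle_trans X _ _ _ (abs_geN y) Hy)]).
  unfold vabs at 1. apply join_add_le; rewrite vaddC; unfold vabs at 1;
    apply join_add_le.
  - apply (le_shift Bx). vring.
  - apply (le_shift By). vring.
  - apply (le_shift By'). vring.
  - apply (le_shift Bx'). vring.
Qed.

(** ** Positive and negative parts, Riesz decomposition *)

Definition pos_part (x : X) : X := join x zero.
Definition neg_part (x : X) : X := join (opp x) zero.

Lemma pos_part_ge0 (x : X) : zero ≤ pos_part x.
Proof. apply vjoin_r. Qed.

Lemma neg_part_ge0 (x : X) : zero ≤ neg_part x.
Proof. apply vjoin_r. Qed.

Lemma pos_part_ge (x : X) : x ≤ pos_part x.
Proof. apply vjoin_l. Qed.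

Lemma neg_part_le_abs (x : X) : neg_part x ≤ abs x.
Proof. apply vjoin_lub; [apply abs_geN|apply abs_ge0]. Qed.

Lemma pos_sub_neg_part (x : X) : pos_part x ⊖ neg_part x = x.
Proof.
  assert (E : neg_part x = pos_part x ⊖ x).
  { apply vle_anti.
    - apply vjoin_lub.
      + apply (le_shift (pos_part_ge0 x)); vring.
      + apply (le_shift (pos_part_ge x)); vring.
    - unfold pos_part at 1. apply join_add_le.
      + replace (x ⊖ x) with zero by vring. apply neg_part_ge0.
      + replace (zero ⊖ x) with (opp x) by vring. apply vjoin_l. }
  rewrite E. vring.
Qed.

Lemma pos_add_neg_part (x : X) : pos_part x ⊕ neg_part x = abs x.
Proof.
  apply vle_anti.
  - unfold pos_part at 1. apply join_add_le.
    + rewrite vaddC. unfold neg_part at 1. apply join_add_le.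
      * replace (opp x ⊕ x) with zero by vring. apply abs_ge0.
      * replace (zero ⊕ x) with x by vring. apply abs_ge.
    + replace (zero ⊕ neg_part x) with (neg_part x) by vring. apply neg_part_le_abs.
  - apply abs_le.
    + apply (le_shift (le_add2 (pos_part_ge0 x) (vjoin_l X (opp x) zero))).
      unfold neg_part. vring.
    + apply (le_shift (le_add2 (pos_part_ge x) (neg_part_ge0 x))). vring.
Qed.

(** Riesz decomposition for positive vectors: [0 ≤ w ≤ M + N] splits [w] into
    positive pieces below [M] and [N] (take [w ∧ M] and the remainder). *)
Lemma riesz_decomposition (w M N : X) :
  zero ≤ w -> w ≤ M ⊕ N -> zero ≤ M -> zero ≤ N ->
  exists w0 w1, w = w0 ⊕ w1 /\ zero ≤ w0 /\ w0 ≤ M /\ zero ≤ w1 /\ w1 ≤ N.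
Proof.
  intros Hw HwMN HM HN.
  set (j := join (opp w) (opp M)).
  assert (Hj : j ≤ zero).
  { apply vjoin_lub; [apply (le_shift Hw)|apply (le_shift HM)]; vring. }
  exists (opp j), (w ⊕ j). repeat split.
  - vring.
  - apply (le_shift Hj); vring.
  - apply (le_shift (vjoin_r X (opp w) (opp M))); fold j; vring.
  - apply (le_shift (vjoin_l X (opp w) (opp M))); fold j; vring.
  - rewrite vaddC. apply join_add_le.
    + replace (opp w ⊕ w) with zero by vring; auto.
    + apply (le_shift HwMN); vring.
Qed.

(** Riesz decomposition for the absolute value: [|a| ≤ M + N] lets us write
    [a = b + c] with [|b| ≤ M] and [|c| ≤ N]; decompose [a⁺], then [a⁻] in what
    is left of [M] and [N]. *)
Lemma abs_decomposition (a M N : X) :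
  zero ≤ M -> zero ≤ N -> abs a ≤ M ⊕ N ->
  exists b c, a = b ⊕ c /\ abs b ≤ M /\ abs c ≤ N.
Proof.
  intros HM HN Ha. rewrite <- pos_add_neg_part in Ha.
  assert (Hpos : pos_part a ≤ M ⊕ N).
  { apply vle_trans with (2 := Ha). apply (le_shift (neg_part_ge0 a)). vring. }
  destruct (riesz_decomposition (pos_part_ge0 a) Hpos HM HN)
    as (p0 & p1 & Ep & Hp0 & Hp0M & Hp1 & Hp1N).
  assert (HM' : zero ≤ M ⊖ p0) by (apply (le_shift Hp0M); vring).
  assert (HN' : zero ≤ N ⊖ p1) by (apply (le_shift Hp1N); vring).
  assert (Hneg : neg_part a ≤ (M ⊖ p0) ⊕ (N ⊖ p1)).
  { apply (le_shift Ha). rewrite Ep. vring. }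
  destruct (riesz_decomposition (neg_part_ge0 a) Hneg HM' HN')
    as (n0 & n1 & En & Hn0 & Hn0M & Hn1 & Hn1N).
  exists (p0 ⊖ n0), (p1 ⊖ n1). split; [|split].
  - rewrite <- (pos_sub_neg_part a), Ep, En. vring.
  - apply vle_trans with (1 := abs_sub_nonneg_le Hp0 Hn0).
    apply (le_shift Hn0M). vring.
  - apply vle_trans with (1 := abs_sub_nonneg_le Hp1 Hn1).
    apply (le_shift Hn1N). vring.
Qed.


(** * Extreme points of a solid set *)

Section SolidSet.
Variable A : X -> Prop.
Hypothesis A_solid : solid X A.

Lemma solid_abs (x : X) : A x -> A (abs x).
Proof. intro Hx. apply (A_solid Hx). rewrite abs_abs. apply vle_refl. Qed.

(** If an extreme point [a] is dominated in modulus by a point [x] of [A], then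
    [a ± (|x| - |a|)] lie in [A] and average to [a], so [|x| = |a|]. *)
Lemma extreme_abs_eq (a x : X) :
  extreme_point X A a -> A x -> abs a ≤ abs x -> abs x = abs a.
Proof.
  intros [_ Hext] Hx H.
  set (d := abs x ⊖ abs a).
  assert (Hd : zero ≤ d) by (apply (le_shift H); unfold d; vring).
  assert (Hshift : forall e, abs e = d -> A (a ⊕ e)).
  { intros e He. apply (A_solid Hx). apply vle_trans with (1 := abs_triangle _ _).
    rewrite He. replace (abs a ⊕ d) with (abs x) by (unfold d; vring). apply vle_refl. }
  assert (Hplus : A (a ⊕ d)) by (apply Hshift, abs_nonneg, Hd).
  assert (Hminus : A (a ⊖ d)) by (apply Hshift; rewrite abs_opp; apply abs_nonneg, Hd).
  assert (E : a = comb (/2) (a ⊕ d) (a ⊖ d)) by (unfold convex_comb; vring).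
  assert (Hhalf : 0 < /2 < 1) by lra.
  destruct (Hext _ _ _ Hplus Hminus Hhalf E) as [E0 _].
  replace (abs x) with (abs a ⊕ (a ⊕ d ⊖ a)) by (unfold d; vring).
  rewrite E0. vring.
Qed.

(** If [|a| ≤ (1-t) x0 + t x1] for an extreme point [a] and [x0, x1 ∈ A], then
    [|a|] is below both [|x0|] and [|x1|]: split [a] along [(1-t)|x0| + t|x1|] by
    Riesz decomposition and use extremality on the resulting convex combination. *)
Lemma extreme_abs_le (a x0 x1 : X) t :
  extreme_point X A a -> A x0 -> A x1 -> 0 < t < 1 ->
  abs a ≤ comb t x0 x1 -> abs a ≤ abs x0 /\ abs a ≤ abs x1.
Proof.
  intros [_ Hext] Hx0 Hx1 Ht H.
  assert (Hs : 0 < 1 - t) by lra.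
  assert (HM : zero ≤ (1 - t) ⋅ abs x0) by (apply scal_nonneg; [lra|apply abs_ge0]).
  assert (HN : zero ≤ t ⋅ abs x1) by (apply scal_nonneg; [lra|apply abs_ge0]).
  assert (HaMN : abs a ≤ (1 - t) ⋅ abs x0 ⊕ t ⋅ abs x1).
  { apply vle_trans with (1 := H). apply convex_comb_le_abs; lra. }
  destruct (abs_decomposition HM HN HaMN) as (b & c & Ea & Hb & Hc).
  pose proof (abs_scal_inv_le Hs Hb) as Hz0.
  pose proof (abs_scal_inv_le (proj1 Ht) Hc) as Hz1.
  assert (E : a = comb t (/(1 - t) ⋅ b) (/t ⋅ c)).
  { rewrite Ea. unfold convex_comb. vring; lra. }
  destruct (Hext _ _ _ (A_solid Hx0 Hz0) (A_solid Hx1 Hz1) Ht E) as [E0 E1].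
  split; [rewrite <- E0 | rewrite E1]; assumption.
Qed.

Lemma convex_comb_squeeze (c x0 x1 : X) t :
  0 < t < 1 -> x0 ≤ c -> x1 ≤ c -> c ≤ comb t x0 x1 -> x0 = c /\ c = x1.
Proof.
  intros Ht H0 H1 H.
  assert (He0 : zero ≤ (1 - t) ⋅ (c ⊖ x0)).
  { apply scal_nonneg; [lra|apply (le_shift H0); vring]. }
  assert (He1 : zero ≤ t ⋅ (c ⊖ x1)).
  { apply scal_nonneg; [lra|apply (le_shift H1); vring]. }
  assert (Hsum : (1 - t) ⋅ (c ⊖ x0) ⊕ t ⋅ (c ⊖ x1) ≤ zero).
  { apply (le_shift H). unfold convex_comb. vring. }
  pose proof (nonneg_sum_le0 He0 He1 Hsum) as Z0.
  rewrite vaddC in Hsum. pose proof (nonneg_sum_le0 He1 He0 Hsum) as Z1.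
  rewrite <- (vscal0r X (1 - t)) in Z0. apply scal_cancel in Z0; [|lra].
  rewrite <- (vscal0r X t) in Z1. apply scal_cancel in Z1; [|lra].
  split.
  - replace x0 with (c ⊖ (c ⊖ x0)) by vring. rewrite Z0. vring.
  - replace x1 with (c ⊖ (c ⊖ x1)) by vring. rewrite Z1. vring.
Qed.

Lemma extreme_abs_order_extreme (a : X) :
  extreme_point X A a -> order_extreme_point X A (abs a).
Proof.
  intro Hext. split; [apply solid_abs, (proj1 Hext)|].
  intros x0 x1 t Hx0 Hx1 Ht H.
  destruct (extreme_abs_le Hext Hx0 Hx1 Ht H) as [H0 H1].
  apply (convex_comb_squeeze Ht); [| |exact H].
  - rewrite <- (extreme_abs_eq Hext Hx0 H0). apply abs_ge.
  - rewrite <- (extreme_abs_eq Hext Hx1 H1). apply abs_ge.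
Qed.

(** Two points of the order interval [[-c, c]] having a proper convex combination
    of modulus at least [c] coincide: writing the combination as
    [(x0 + x1)/2 + (1/2 - t)(x0 - x1)] and using [|x0 + x1| + |x0 - x1| ≤ 2c]
    yields [(1/2 - |1/2 - t|) |x0 - x1| ≤ 0]. *)
Lemma convex_comb_abs_eq (c x0 x1 : X) t :
  0 < t < 1 -> abs x0 ≤ c -> abs x1 ≤ c -> c ≤ abs (comb t x0 x1) -> x0 = x1.
Proof.
  intros Ht H0 H1 H.
  set (k := Rabs (/2 - t)).
  assert (Hk : 0 < /2 - k) by (unfold k, Rabs; destruct (Rcase_abs (/2 - t)); lra).
  assert (Hsplit : c ≤ /2 ⋅ abs (x0 ⊕ x1) ⊕ k ⋅ abs (x0 ⊖ x1)).
  { apply vle_trans with (1 := H).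
    replace (comb t x0 x1) with (/2 ⋅ (x0 ⊕ x1) ⊕ (/2 - t) ⋅ (x0 ⊖ x1))
      by (unfold convex_comb; vring).
    apply vle_trans with (1 := abs_triangle _ _).
    rewrite !abs_scal, (Rabs_pos_eq (/2)) by lra. apply vle_refl. }
  pose proof (@vle_scal X (/2) _ _ ltac:(lra) (abs_add_abs_sub_le H0 H1)) as Hsum.
  assert (Hv : (/2 - k) ⋅ abs (x0 ⊖ x1) ≤ (/2 - k) ⋅ zero).
  { rewrite vscal0r. apply (le_shift (le_add2 Hsplit Hsum)). vring. }
  apply le_scal_rev in Hv; [|exact Hk]. apply abs_le0 in Hv.
  replace x0 with (x0 ⊖ x1 ⊕ x1) by vring. rewrite Hv. vring.
Qed.

Lemma abs_order_extreme_extreme (a : X) :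
  A a -> order_extreme_point X A (abs a) -> extreme_point X A a.
Proof.
  intros Ha [_ Horder]. split; [exact Ha|].
  intros x0 x1 t Hx0 Hx1 Ht E.
  assert (Hle : abs a ≤ comb t (abs x0) (abs x1)).
  { rewrite E. apply abs_convex_comb_le; lra. }
  destruct (Horder _ _ _ (solid_abs Hx0) (solid_abs Hx1) Ht Hle) as [E0 E1].
  assert (Hx : x0 = x1).
  { apply (convex_comb_abs_eq (c := abs a) Ht).
    - rewrite E0; apply vle_refl.
    - rewrite E1; apply vle_refl.
    - rewrite <- E; apply vle_refl. }
  subst x1. rewrite E. unfold convex_comb. split; vring.
Qed.

End SolidSet.
End VectorLattice.

Theorem mainTheorem1 (X : BanachLattice) (A : X -> Prop) (a : X) :
  solid X A -> A a ->
  (extreme_point X A a <-> order_extreme_point X A (vabs X a)).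
Proof.
  intros HS Ha. split.
  - exact (extreme_abs_order_extreme HS (a := a)).
  - exact (abs_order_extreme_extreme HS Ha).
Qed.
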